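(* For each $0\le m<N$ there exists a total ordering $\leqslant_m$ on the real vector space $\mathbb R\Phi$, compatible with its vector space structure, such that $\gamma_i>_m0$ for $i\le m$ and $\gamma_i<_m0$ for $i>m$.
   Context: Let $\Phi$ be a finite indecomposable root system spanning the real vector space $\mathbb R\Phi$, with simple roots $\Pi$, positive roots $\Phi^+$, $N=|\Phi^+|$, Weyl group $W$ with longest element $w_0$. Fix a reduced expression $w_0=s_{\beta_1}\cdots s_{\beta_N}$ with $\beta_i\in\Pi$, set $w_i=s_{\beta_1}\cdots s_{\beta_{i-1}}$ and $\gamma_i=w_i(\beta_i)$, so that $\Phi^+=\{\gamma_1,\dots,\gamma_N\}$ is a convex ordering (if $\gamma_i+\gamma_j=\gamma_l$ with $i<j$ then $i<l<j$). *)

From HB Require Import structures.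
From mathcomp Require Import all_boot all_order all_algebra.
From mathcomp Require Import reals.
Set Implicit Arguments. Unset Strict Implicit. Unset Printing Implicit Defensive.
Import Order.TTheory GRing.Theory Num.Theory.
Local Open Scope ring_scope.

Section RootSystems.
Variables (R : realType) (n : nat).
Notation V := 'rV[R]_n.

Definition dot (u v : V) : R := (u *m v^T) 0 0.

Definition refl (a : V) (x : V) : V := x - ((2 * dot x a) / dot a a) *: a.

Definition root_system (Phi : seq V) : Prop :=
  [/\ uniq Phi /\ (0 : V) \notin Phi,
      (forall v : V, exists c : 'I_(size Phi) -> R,
          v = \sum_(i < size Phi) c i *: Phi`_i),
      (forall a b, a \in Phi -> b \in Phi -> refl a b \in Phi),
      (forall a b, a \in Phi -> b \in Phi ->
          exists z : int, (2 * dot b a) / dot a a = z%:~R) &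
      (forall a (c : R), a \in Phi -> c *: a \in Phi -> c = 1 \/ c = -1)].

Definition indecomposable (Phi : seq V) : Prop :=
  forall P : pred V,
    (forall a b, a \in Phi -> b \in Phi -> P a -> ~~ P b -> dot a b = 0) ->
    all P Phi \/ all (predC P) Phi.

Definition simple_roots (Phi Pi : seq V) : Prop :=
  [/\ uniq Pi, {subset Pi <= Phi},
      (forall c : 'I_(size Pi) -> R,
          \sum_(i < size Pi) c i *: Pi`_i = 0 -> forall i, c i = 0) &
      (forall a, a \in Phi -> exists c : 'I_(size Pi) -> int,
          a = \sum_(i < size Pi) (c i)%:~R *: Pi`_i /\
          ((forall i, (0 <= c i)%R) \/ (forall i, (c i <= 0)%R)))].

Definition prod_refl (s : seq V) : V -> V := foldr (fun a f => refl a \o f) id s.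

Definition reduced_word (Pi s : seq V) : Prop :=
  {subset s <= Pi} /\
  forall t : seq V, {subset t <= Pi} ->
    (forall v, prod_refl t v = prod_refl s v) -> (size s <= size t)%N.

Definition reduced_expr_w0 (Pi s : seq V) : Prop :=
  reduced_word Pi s /\
  forall t, reduced_word Pi t -> (size t <= size s)%N.

(* gamma_{k+1} = w_{k+1}(beta_{k+1}) = s_{beta_1} ... s_{beta_k} (beta_{k+1}),
   with 0-based index k *)
Definition gamma (beta : seq V) (k : nat) : V :=
  prod_refl (take k beta) (nth 0 beta k).

Definition total_vs_order (le : V -> V -> Prop) : Prop :=
  [/\ (forall x, le x x) /\
      (forall x y, le x y -> le y x -> x = y),
      (forall x y z, le x y -> le y z -> le x z),
      (forall x y, le x y \/ le y x),
      (forall x y z, le x y -> le (x + z) (y + z)) &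
      (forall x y (c : R), 0 < c -> le x y -> le (c *: x) (c *: y))].

End RootSystems.

(* Let w = s_beta_1 ... s_beta_m.  Since the word beta is reduced, w^-1
   sends gamma_1, ..., gamma_m to negative roots and every later gamma_k to
   a positive root: both facts reduce, through infixes and reversals of
   beta, to "if s_b u is reduced then u^-1(b) > 0", a consequence of the
   exchange condition.  So ordering RPhi by the lexicographic order of the
   simple-root coordinates of -w^-1 x makes exactly gamma_1, ..., gamma_m
   positive, and this order is total and compatible with the vector space
   structure because x |-> -w^-1 x and the coordinate map are injective
   linear maps. *)

From HB Require Import structures.
From mathcomp Require Import all_boot all_order all_algebra.
From mathcomp Require Import reals.
From mathcomp Require Import ring zify.
Set Implicit Arguments. Unset Strict Implicit. Unset Printing Implicit Defensive.
Import Order.TTheory GRing.Theory Num.Theory.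
Local Open Scope ring_scope.

Lemma subset_cons (T : eqType) (x : T) (s S : seq T) :
  {subset x :: s <= S} -> x \in S /\ {subset s <= S}.
Proof. by move=> xsS; split=> [|y ys]; apply: xsS; rewrite inE ?eqxx ?ys ?orbT. Qed.

Lemma subset_rev (T : eqType) (s S : seq T) : {subset s <= S} -> {subset rev s <= S}.
Proof. by move=> sS x; rewrite mem_rev; apply: sS. Qed.

Section Reflections.
Variables (R : realType) (n : nat).
Notation V := 'rV[R]_n.
Implicit Types (x y a : V) (s t : seq V).

Lemma dotC x y : dot x y = dot y x.
Proof. by rewrite /dot -[in RHS](trmxK (y *m x^T)) trmx_mul trmxK [in RHS]mxE. Qed.

Lemma dotDl x y a : dot (x + y) a = dot x a + dot y a.
Proof. by rewrite /dot mulmxDl mxE. Qed.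

Lemma dotZl (c : R) x a : dot (c *: x) a = c * dot x a.
Proof. by rewrite /dot -scalemxAl mxE. Qed.

Lemma dotBl x y a : dot (x - y) a = dot x a - dot y a.
Proof. by rewrite -scaleN1r dotDl dotZl mulN1r. Qed.

Lemma dotBr x y a : dot a (x - y) = dot a x - dot a y.
Proof. by rewrite dotC dotBl !(dotC a). Qed.

Lemma dotZr (c : R) x a : dot a (c *: x) = c * dot a x.
Proof. by rewrite dotC dotZl dotC. Qed.

Lemma dot_gt0 x : x != 0 -> 0 < dot x x.
Proof.
move=> x0; rewrite /dot mxE.
have sq_ge0 j : 0 <= x 0 j * x^T j 0 by rewrite mxE -expr2 sqr_ge0.
rewrite lt_def psumr_neq0 ?sumr_ge0 ?andbT //.
apply: contraNT x0 => /hasPn x_eq0; apply/eqP/rowP => j; rewrite mxE.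
have := x_eq0 j (mem_index_enum j).
by rewrite mxE -expr2 lt_def sqr_ge0 andbT negbK sqrf_eq0 => /eqP.
Qed.

Lemma dot_neq0 x : x != 0 -> dot x x != 0.
Proof. by move/dot_gt0; rewrite lt0r => /andP[]. Qed.

Lemma reflD a x y : refl a (x + y) = refl a x + refl a y.
Proof. by rewrite /refl dotDl mulrDr mulrDl scalerDl opprD addrACA. Qed.

Lemma reflZ a (c : R) x : refl a (c *: x) = c *: refl a x.
Proof. by rewrite /refl dotZl scalerBr scalerA; congr (_ - _ *: _); ring. Qed.

Lemma dot_refl a x : a != 0 -> dot (refl a x) a = - dot x a.
Proof. by move=> /dot_neq0 aa0; rewrite /refl dotBl dotZl; field. Qed.

Lemma reflK a : a != 0 -> involutive (refl a).
Proof.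
by move=> a0 x; rewrite {1}/refl dot_refl // /refl mulrN mulNr scaleNr opprK subrK.
Qed.

Lemma refl_isometry a x y : a != 0 -> dot (refl a x) (refl a y) = dot x y.
Proof.
move=> /dot_neq0 aa0; rewrite /refl !dotBl !dotBr !dotZl !dotZr ?(dotC a y) ?(dotC a x).
by field.
Qed.

Lemma refl_self a : a != 0 -> refl a a = - a.
Proof.
move=> /dot_neq0 aa0; rewrite /refl mulfK // scaler_nat mulr2n.
by rewrite opprD addrA subrr sub0r.
Qed.

Lemma prod_refl_cat s t x : prod_refl (s ++ t) x = prod_refl s (prod_refl t x).
Proof. by elim: s => //= a s ->. Qed.

Lemma prod_refl_rcons s a x : prod_refl (rcons s a) x = prod_refl s (refl a x).
Proof. by rewrite -cats1 prod_refl_cat. Qed.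

Lemma prod_reflD s x y : prod_refl s (x + y) = prod_refl s x + prod_refl s y.
Proof. by elim: s => //= a s ->; rewrite reflD. Qed.

Lemma prod_reflZ s (c : R) x : prod_refl s (c *: x) = c *: prod_refl s x.
Proof. by elim: s => //= a s ->; rewrite reflZ. Qed.

Lemma prod_reflN s x : prod_refl s (- x) = - prod_refl s x.
Proof. by rewrite -scaleN1r prod_reflZ scaleN1r. Qed.

Lemma prod_reflB s x y : prod_refl s (x - y) = prod_refl s x - prod_refl s y.
Proof. by rewrite prod_reflD prod_reflN. Qed.

Lemma prod_refl0 s : prod_refl s 0 = 0.
Proof. by rewrite -(scale0r 0) prod_reflZ !scale0r. Qed.

Section NonzeroWord.
Variable s : seq V.
Hypothesis s0 : 0 \notin s.

Lemma prod_refl_isometry x y : dot (prod_refl s x) (prod_refl s y) = dot x y.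
Proof.
elim: s s0 => //= a t IH; rewrite inE negb_or eq_sym => /andP[a0 t0].
by rewrite refl_isometry // IH.
Qed.

Lemma prod_refl_conj a x :
  refl (prod_refl s a) (prod_refl s x) = prod_refl s (refl a x).
Proof. by rewrite /refl prod_reflB prod_reflZ !prod_refl_isometry. Qed.

Lemma prod_reflK : cancel (prod_refl s) (prod_refl (rev s)).
Proof.
elim: s s0 => //= a t IH; rewrite inE negb_or eq_sym => /andP[a0 t0] x.
by rewrite rev_cons prod_refl_rcons reflK // IH.
Qed.

Lemma prod_refl_inj : injective (prod_refl s).
Proof. exact: can_inj prod_reflK. Qed.

End NonzeroWord.

Lemma prod_reflKV s : 0 \notin s -> cancel (prod_refl (rev s)) (prod_refl s).
Proof. by move=> s0; rewrite -{2}(revK s); apply: prod_reflK; rewrite mem_rev. Qed.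

Lemma prod_refl_rev_eq s t : 0 \notin s -> 0 \notin t ->
  prod_refl t =1 prod_refl s -> prod_refl (rev t) =1 prod_refl (rev s).
Proof.
by move=> s0 t0 Est v; rewrite -{1}(prod_reflKV s0 v) -Est prod_reflK.
Qed.

End Reflections.

Section PositiveRoots.
Variables (R : realType) (n : nat).
Notation V := 'rV[R]_n.
Variables (Phi Pi : seq V).
Hypothesis Phi_root : root_system Phi.
Hypothesis Pi_simple : simple_roots Phi Pi.
Implicit Types (v a b : V) (s t : seq V).

Definition nonneg_comb v := exists c : 'I_(size Pi) -> int,
  v = \sum_i (c i)%:~R *: Pi`_i /\ forall i, 0 <= c i.

Lemma roots_neq0 : 0 \notin Phi.
Proof. by case: Phi_root => [[]]. Qed.

Lemma root_neq0 a : a \in Phi -> a != 0.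
Proof. by move=> aPhi; apply: contraNneq roots_neq0 => <-. Qed.

Lemma simple_root a : a \in Pi -> a \in Phi.
Proof. by case: Pi_simple => _ PiPhi _ _; apply: PiPhi. Qed.

Lemma simple_word_neq0 s : {subset s <= Pi} -> 0 \notin s.
Proof. by move=> sPi; apply/negP => /sPi /simple_root; rewrite (negPf roots_neq0). Qed.

Lemma prod_refl_root s a : {subset s <= Phi} -> a \in Phi -> prod_refl s a \in Phi.
Proof.
case: Phi_root => _ _ reflPhi _ _.
elim: s => //= b s IH bsPhi aPhi; apply: reflPhi; first by apply: bsPhi; rewrite mem_head.
by apply: IH => // c cs; apply: bsPhi; rewrite inE cs orbT.
Qed.

Lemma simple_coef_inj (c d : 'I_(size Pi) -> R) :
  \sum_i c i *: Pi`_i = \sum_i d i *: Pi`_i -> c =1 d.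
Proof.
case: Pi_simple => _ _ Pi_free _ Ecd i; apply/eqP; rewrite -subr_eq0; apply/eqP.
apply: (Pi_free (fun i => c i - d i)).
by under eq_bigr do rewrite scalerBl; rewrite sumrB Ecd subrr.
Qed.

Lemma simple_index a : a \in Pi -> exists p : 'I_(size Pi), Pi`_p = a.
Proof. by move=> aPi; exists (Ordinal (etrans (index_mem a Pi) aPi)); rewrite nth_index. Qed.

Lemma sum_simple_delta (p : 'I_(size Pi)) (k : R) :
  \sum_i (if i == p then k else 0) *: Pi`_i = k *: Pi`_p.
Proof. by rewrite (bigD1 p) //= eqxx big1 ?addr0 // => i /negPf ->; rewrite scale0r. Qed.

Lemma nonneg_comb_simple a : a \in Pi -> nonneg_comb a.
Proof.
move=> /simple_index [p <-]; exists (fun i => (i == p)%:Z).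
split; last by move=> i; case: (i == p).
rewrite -[LHS]scale1r -(sum_simple_delta p 1); apply: eq_bigr => i _; by case: (i == p).
Qed.

Lemma root_nonneg_or_nonpos a : a \in Phi -> nonneg_comb a \/ nonneg_comb (- a).
Proof.
case: Pi_simple => _ _ _ Phi_comb aPhi; have [c [-> [c_ge0|c_le0]]] := Phi_comb a aPhi.
  by left; exists c.
right; exists (fun i => - c i); split; last by move=> i; rewrite oppr_ge0.
by rewrite -sumrN; apply: eq_bigr => i _; rewrite intrN scaleNr.
Qed.

Lemma nonneg_comb_anti v : nonneg_comb v -> nonneg_comb (- v) -> v = 0.
Proof.
move=> [c [Ec c_ge0]] [d [Ed d_ge0]].
have c_eq0 i : c i = 0.
  have Ecd : \sum_i ((c i)%:~R + (d i)%:~R) *: Pi`_i = \sum_(i < size Pi) (0 : R) *: Pi`_i.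
    under eq_bigr do rewrite scalerDl.
    by rewrite big_split /= -Ec -Ed subrr big1 // => j _; rewrite scale0r.
  have /eqP := simple_coef_inj Ecd i; rewrite -intrD intr_eq0 => /eqP.
  by have := c_ge0 i; have := d_ge0 i; lia.
by rewrite Ec big1 // => i _; rewrite c_eq0 scale0r.
Qed.

(* A simple reflection s_al changes only the al-coordinate of a root, so if
   it made a positive root b nonpositive, b would be a multiple of al. *)
Lemma nonneg_comb_refl_simple al b : al \in Pi -> b \in Phi -> nonneg_comb b ->
  b != al -> nonneg_comb (refl al b).
Proof.
move=> alPi bPhi [c [Ec c_ge0]] b_neq_al.
have alPhi := simple_root alPi.
case: Phi_root => _ _ reflPhi Phi_int Phi_reduced.
have [p Ep] := simple_index alPi.
have [z Ez] := Phi_int _ _ alPhi bPhi.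
case: (root_nonneg_or_nonpos (reflPhi _ _ alPhi bPhi)) => // [[d [Ed d_ge0]]].
pose e i := c i - (if i == p then z else 0).
have Ee : refl al b = \sum_i (e i)%:~R *: Pi`_i.
  rewrite /refl Ez Ec -Ep -(sum_simple_delta p z%:~R) -sumrB; apply: eq_bigr => i _.
  by rewrite /e intrD intrN scalerBl; case: (i == p).
have Ede : (fun i => (- d i)%:~R : R) =1 (fun i => (e i)%:~R).
  apply: simple_coef_inj; rewrite -Ee -[refl al b]opprK Ed -sumrN.
  by apply: eq_bigr => j _; rewrite intrN scaleNr.
have c_eq0 i : i != p -> c i = 0.
  move=> /negPf ip; move/eqP: (Ede i); rewrite /= eqr_int /e ip subr0 => /eqP.
  by have := c_ge0 i; have := d_ge0 i; lia.
have Eb : b = (c p)%:~R *: al.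
  rewrite Ec -Ep -sum_simple_delta; apply: eq_bigr => i _.
  by case: eqVneq => [->|/c_eq0 ->] //; rewrite scale0r.
have cpPhi : (c p)%:~R *: al \in Phi by rewrite -Eb.
have [cp1|cpN1] := Phi_reduced _ _ alPhi cpPhi.
  by move: b_neq_al; rewrite Eb cp1 scale1r eqxx.
have : (c p)%:~R = (-1 : int)%:~R :> R by rewrite cpN1.
by move/eqP; rewrite eqr_int => /eqP cp; have := c_ge0 p; rewrite cp.
Qed.

End PositiveRoots.

Section ReducedWords.
Variables (R : realType) (n : nat).
Notation V := 'rV[R]_n.
Variables (Phi Pi : seq V).
Hypothesis Phi_root : root_system Phi.
Hypothesis Pi_simple : simple_roots Phi Pi.
Implicit Types (a b : V) (s t : seq V).

Lemma simple_word_root s a : {subset s <= Pi} -> a \in Pi -> prod_refl s a \in Phi.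
Proof.
move=> sPi aPi; apply: prod_refl_root (simple_root Pi_simple aPi) => //.
by move=> b /sPi /(simple_root Pi_simple).
Qed.

Lemma exchange s al : {subset s <= Pi} -> al \in Pi ->
  nonneg_comb Pi (- prod_refl s al) ->
  exists2 t, {subset t <= Pi} /\ (size t < size s)%N &
    forall v, prod_refl t v = prod_refl s (refl al v).
Proof.
elim: s => [|b s IH] bsPi alPi s_al_neg.
  have al0 := nonneg_comb_anti Pi_simple (nonneg_comb_simple alPi) s_al_neg.
  by move: (roots_neq0 Phi_root); rewrite -al0 (simple_root Pi_simple alPi).
have [bPi sPi] := subset_cons bsPi.
have s_al_root := simple_word_root sPi alPi.
case: (root_nonneg_or_nonpos Pi_simple s_al_root) => [s_al_pos|]; last first.
  move=> /(IH sPi alPi) [t [tPi tlt] Et]; exists (b :: t) => //= [|v]; last by rewrite Et.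
  by split=> // c; rewrite inE => /predU1P [->|/tPi].
have [s_al_b|s_al_neq_b] := eqVneq (prod_refl s al) b.
  have b0 := root_neq0 Phi_root (simple_root Pi_simple bPi).
  exists s => // v.
  by rewrite /= -prod_refl_conj ?s_al_b ?reflK // (simple_word_neq0 Phi_root Pi_simple sPi).
have := nonneg_comb_refl_simple Phi_root Pi_simple bPi s_al_root s_al_pos s_al_neq_b.
move=> /(nonneg_comb_anti Pi_simple) /(_ s_al_neg) bs_al0.
by move: (roots_neq0 Phi_root); rewrite -bs_al0 (simple_word_root bsPi alPi).
Qed.

Lemma reduced_wordW s : reduced_word Pi s -> {subset s <= Pi}.
Proof. by case. Qed.

Lemma reduced_cons_nonneg b u : reduced_word Pi (b :: u) ->
  nonneg_comb Pi (prod_refl (rev u) b).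
Proof.
move=> [buPi bu_min]; have [bPi uPi] := subset_cons buPi.
have ru_b_root := simple_word_root (subset_rev uPi) bPi.
case: (root_nonneg_or_nonpos Pi_simple ru_b_root) => // ru_b_neg.
have [t [tPi tlt] Et] := exchange (subset_rev uPi) bPi ru_b_neg.
have Et_rev : prod_refl t =1 prod_refl (rev (b :: u)).
  by move=> v; rewrite Et rev_cons prod_refl_rcons.
have := prod_refl_rev_eq (simple_word_neq0 Phi_root Pi_simple (subset_rev buPi))
  (simple_word_neq0 Phi_root Pi_simple tPi) Et_rev.
rewrite revK => Erev.
rewrite size_rev in tlt; have := bu_min _ (subset_rev tPi) Erev.
by rewrite /= size_rev => /(ltn_trans tlt); rewrite ltnn.
Qed.

Lemma reduced_word_infix p q r : reduced_word Pi (p ++ q ++ r) -> reduced_word Pi q.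
Proof.
move=> [pqrPi pqr_min]; split=> [c cq|t tPi Et].
  by apply: pqrPi; rewrite !mem_cat cq orbT.
have ptrPi : {subset p ++ t ++ r <= Pi}.
  move=> c; rewrite !mem_cat => /or3P [cp|/tPi //|cr];
    by apply: pqrPi; rewrite !mem_cat ?cp ?cr ?orbT.
have Eptr : prod_refl (p ++ t ++ r) =1 prod_refl (p ++ q ++ r).
  by move=> v; rewrite !prod_refl_cat Et.
by have := pqr_min _ ptrPi Eptr; rewrite !size_cat; lia.
Qed.

Lemma reduced_word_rev s : reduced_word Pi s -> reduced_word Pi (rev s).
Proof.
move=> [sPi s_min]; split=> [|t tPi Et]; first exact: subset_rev.
have Erev := prod_refl_rev_eq (simple_word_neq0 Phi_root Pi_simple (subset_rev sPi))
  (simple_word_neq0 Phi_root Pi_simple tPi) Et.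
rewrite revK in Erev.
by have := s_min _ (subset_rev tPi) Erev; rewrite !size_rev.
Qed.

End ReducedWords.

Section LexNonneg.
Variables (R : realDomainType) (k : nat).
Implicit Types (u v : 'rV[R]_k) (s : seq 'I_k).

Fixpoint lex_nonneg u s : bool :=
  if s is i :: s' then (0 < u 0 i) || (u 0 i == 0) && lex_nonneg u s' else true.

Lemma lex_nonneg_head u i s : lex_nonneg u (i :: s) -> 0 <= u 0 i.
Proof. by move=> /= /orP [/ltW|/andP [/eqP -> _]]. Qed.

Lemma lex_nonneg_ge0 u s : (forall i, 0 <= u 0 i) -> lex_nonneg u s.
Proof.
move=> u_ge0; elim: s => //= i s ->.
by rewrite andbT orbC eq_sym -le_eqVlt.
Qed.

Lemma lex_nonneg0 s : lex_nonneg 0 s.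
Proof. by apply: lex_nonneg_ge0 => i; rewrite mxE. Qed.

Lemma lex_nonnegD u v s : lex_nonneg u s -> lex_nonneg v s -> lex_nonneg (u + v) s.
Proof.
elim: s => //= i s IH lex_u lex_v.
have u_ge0 := lex_nonneg_head lex_u; have v_ge0 := lex_nonneg_head lex_v.
move: lex_u lex_v => /orP [u_gt0|/andP [/eqP u0 lex_u]] /orP [v_gt0|/andP [/eqP v0 lex_v]];
  rewrite mxE.
- by rewrite ltr_pwDl.
- by rewrite v0 addr0 u_gt0.
- by rewrite u0 add0r v_gt0.
- by rewrite u0 v0 addr0 eqxx IH // orbT.
Qed.

Lemma lex_nonnegZ u (c : R) s : 0 < c -> lex_nonneg u s -> lex_nonneg (c *: u) s.
Proof.
move=> c_gt0; elim: s => //= i s IH /orP [u_gt0|/andP [/eqP u0 lex_u]]; rewrite mxE.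
  by rewrite mulr_gt0.
by rewrite u0 mulr0 eqxx IH // orbT.
Qed.

Lemma lex_nonneg_total u s : lex_nonneg u s \/ lex_nonneg (- u) s.
Proof.
elim: s => [|i s IH] /=; first by left.
by rewrite mxE oppr_gt0 oppr_eq0; case: (ltgtP (u 0 i) 0) => /=; [right | left | ].
Qed.

Lemma lex_nonneg_anti u s : lex_nonneg u s -> lex_nonneg (- u) s ->
  forall i, i \in s -> u 0 i = 0.
Proof.
elim: s => //= i s IH lex_u lex_Nu j.
have u_ge0 := lex_nonneg_head lex_u.
have := lex_nonneg_head lex_Nu; rewrite mxE oppr_ge0 => u_le0.
have u0 : u 0 i = 0 by apply/eqP; rewrite eq_le u_le0 u_ge0.
move: lex_u lex_Nu; rewrite mxE u0 ltxx oppr0 ltxx eqxx /= => lex_u lex_Nu.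
by rewrite inE => /predU1P [->|/IH]; last exact.
Qed.

End LexNonneg.

Lemma lex_total_vs_order (R : realType) (n k : nat) (f : 'rV[R]_n -> 'rV[R]_k) :
  {morph f : x y / x + y} -> (forall c, {morph f : x / c *: x}) ->
  (forall x, f x = 0 -> x = 0) ->
  total_vs_order (fun x y => lex_nonneg (f (y - x)) (enum 'I_k)).
Proof.
move=> fD fZ f_inj.
have fN x : f (- x) = - f x by rewrite -scaleN1r fZ scaleN1r.
have f0 : f 0 = 0 by rewrite -(scale0r 0) fZ scale0r.
have fB x y : f (x - y) = - f (y - x) by rewrite -fN opprB.
split.
- split=> [x|x y lex_yx lex_xy]; first by rewrite subrr f0 lex_nonneg0.
  rewrite fB in lex_xy; apply/eqP; rewrite eq_sym -subr_eq0; apply/eqP/f_inj.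
  by apply/rowP => i; rewrite mxE (lex_nonneg_anti lex_yx lex_xy) ?mem_enum.
- by move=> x y z lex_xy lex_yz; rewrite -(subrKA y) addrC fD lex_nonnegD.
- move=> x y; case: (lex_nonneg_total (f (y - x)) (enum 'I_k)); first by left.
  by rewrite -fB; right.
- by move=> x y z; rewrite opprD addrACA subrr addr0.
- by move=> x y c c_gt0 lex_xy; rewrite -scalerBr fZ lex_nonnegZ.
Qed.

Section SimpleCoordinates.
Variables (R : realType) (n : nat).
Notation V := 'rV[R]_n.
Variables (Phi Pi : seq V).
Hypothesis Phi_root : root_system Phi.
Hypothesis Pi_simple : simple_roots Phi Pi.

Lemma simple_roots_span v : exists c : 'I_(size Pi) -> R, v = \sum_i c i *: Pi`_i.
Proof.
case: Phi_root => _ /(_ v) [d ->] _ _ _; case: Pi_simple => _ _ _ Phi_comb.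
have /fin_all_exists [e Ee] (j : 'I_(size Phi)) :
    exists e : 'I_(size Pi) -> int, Phi`_j = \sum_i (e i)%:~R *: Pi`_i.
  by have [e [Ee _]] := Phi_comb _ (mem_nth 0 (ltn_ord j)); exists e.
exists (fun i => \sum_j d j * (e j i)%:~R).
under eq_bigr do rewrite Ee scaler_sumr.
rewrite exchange_big /=; apply: eq_bigr => i _; rewrite scaler_suml.
by apply: eq_bigr => j _; rewrite scalerA.
Qed.

Lemma simple_coordinates : exists M : 'M[R]_(n, size Pi),
  (forall c : 'I_(size Pi) -> R, (\sum_i c i *: Pi`_i) *m M = \row_(i < size Pi) c i) /\
  (forall v : V, v *m M = 0 -> v = 0).
Proof.
case: Pi_simple => _ _ Pi_free _.
pose P := \matrix_(i < size Pi, j < n) Pi`_i 0 j.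
have rowP_Pi i : row i P = Pi`_i by apply/rowP => j; rewrite !mxE.
have sumE (c : 'I_(size Pi) -> R) : \sum_i c i *: Pi`_i = (\row_(i < size Pi) c i) *m P.
  by rewrite mulmx_sum_row; apply: eq_bigr => i _; rewrite rowP_Pi mxE.
have P_free : row_free P.
  rewrite -kermx_eq0; apply/eqP/matrixP => i j; rewrite [RHS]mxE.
  have : row i (kermx P) *m P = 0 by rewrite -row_mul mulmx_ker row0.
  rewrite mulmx_sum_row; under eq_bigr do rewrite rowP_Pi.
  by move/(Pi_free (fun j => row i (kermx P) 0 j))/(_ j); rewrite mxE.
have [M PM] := row_freeP P_free.
have coordE (c : 'I_(size Pi) -> R) : (\sum_i c i *: Pi`_i) *m M = \row_(i < size Pi) c i.
  by rewrite sumE -mulmxA PM mulmx1.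
exists M; split=> // v; have [c ->] := simple_roots_span v.
rewrite coordE => c0; rewrite big1 // => i _.
by have /rowP/(_ i) := c0; rewrite !mxE => ->; rewrite scale0r.
Qed.

End SimpleCoordinates.

Section Inversions.
Variables (R : realType) (n : nat).
Notation V := 'rV[R]_n.
Variables (Phi Pi beta : seq V).
Hypothesis Phi_root : root_system Phi.
Hypothesis Pi_simple : simple_roots Phi Pi.
Hypothesis beta_reduced : reduced_word Pi beta.

Lemma take_word_neq0 m : 0 \notin take m beta.
Proof.
apply: (simple_word_neq0 Phi_root Pi_simple) => a /mem_take.
exact: (reduced_wordW beta_reduced).
Qed.

Lemma gamma_root k : (k < size beta)%N -> gamma beta k \in Phi.
Proof.
move=> k_lt; have betaPi := reduced_wordW beta_reduced.
apply: (simple_word_root Phi_root Pi_simple); last exact/betaPi/mem_nth.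
by move=> a /mem_take /betaPi.
Qed.

Lemma gamma_before k m : (k < m <= size beta)%N -> exists2 y,
  nonneg_comb Pi y & prod_refl (rev (take m beta)) (gamma beta k) = - y.
Proof.
move=> /andP [km m_le]; set b := nth 0 beta k; set u := drop k.+1 (take m beta).
have Etake : take m beta = take k beta ++ b :: u.
  rewrite -{1}(cat_take_drop k (take m beta)) take_takel ?(ltnW km) //.
  by rewrite (drop_nth 0) ?size_takel // nth_take.
have bu_red : reduced_word Pi (b :: u).
  by apply: (@reduced_word_infix _ _ Pi (take k beta) _ (drop m beta));
     rewrite catA -Etake cat_take_drop.
have y_pos := reduced_cons_nonneg Phi_root Pi_simple bu_red.
exists (prod_refl (rev u) b) => //.
have b0 : b != 0.
  by apply: contraNneq (take_word_neq0 m) => <-; rewrite Etake mem_cat mem_head orbT.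
rewrite Etake rev_cat rev_cons -cats1 /gamma -/b -catA !prod_refl_cat.
by rewrite prod_reflK ?(take_word_neq0 k) //= refl_self // prod_reflN.
Qed.

Lemma gamma_after k m : (m <= k < size beta)%N -> exists2 y,
  nonneg_comb Pi y & prod_refl (rev (take m beta)) (gamma beta k) = y.
Proof.
move=> /andP [mk k_lt]; set b := nth 0 beta k; set v := drop m (take k beta).
have Etake : take k beta = take m beta ++ v.
  by rewrite -{1}(cat_take_drop m (take k beta)) take_takel.
have Ebeta : beta = take m beta ++ (v ++ [:: b]) ++ drop k.+1 beta.
  by rewrite -catA /= -/b -(drop_nth 0 k_lt) catA -Etake cat_take_drop.
have bv_red : reduced_word Pi (b :: rev v).
  have := @reduced_word_infix _ _ Pi (take m beta) (v ++ [:: b]) (drop k.+1 beta).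
  rewrite -Ebeta => /(_ beta_reduced) /(reduced_word_rev Phi_root Pi_simple).
  by rewrite rev_cat.
have y_pos := reduced_cons_nonneg Phi_root Pi_simple bv_red.
rewrite revK in y_pos; exists (prod_refl v b) => //.
by rewrite /gamma -/b Etake prod_refl_cat prod_reflK ?take_word_neq0.
Qed.

End Inversions.

Section WordOrder.
Variables (R : realType) (n : nat).
Notation V := 'rV[R]_n.
Variables (Pi w : seq V) (M : 'M[R]_(n, size Pi)).
Hypothesis w0 : 0 \notin w.
Hypothesis coordE : forall c : 'I_(size Pi) -> R,
  (\sum_i c i *: Pi`_i) *m M = \row_(i < size Pi) c i.
Hypothesis coord_inj : forall v : V, v *m M = 0 -> v = 0.

Definition word_le (x y : V) :=
  lex_nonneg ((- prod_refl (rev w) (y - x)) *m M) (enum 'I_(size Pi)).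

Lemma word_le_total_vs_order : total_vs_order word_le.
Proof.
apply: (@lex_total_vs_order _ _ _ (fun x => (- prod_refl (rev w) x) *m M)) => [x y|c x|x] /=.
- by rewrite prod_reflD opprD mulmxDl.
- by rewrite prod_reflZ -scalerN scalemxAl.
- have rev_w0 : 0 \notin rev w by rewrite mem_rev.
  move=> /coord_inj /eqP; rewrite oppr_eq0 -{1}(prod_refl0 (rev w)) => /eqP.
  exact: (prod_refl_inj rev_w0).
Qed.

Lemma nonneg_comb_lex y s : nonneg_comb Pi y -> lex_nonneg (y *m M) s.
Proof.
by move=> [c [-> c_ge0]]; rewrite coordE; apply: lex_nonneg_ge0 => i; rewrite mxE ler0z.
Qed.

Lemma word_nonneg x : nonneg_comb Pi (- prod_refl (rev w) x) -> word_le 0 x.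
Proof. by move=> /nonneg_comb_lex; rewrite /word_le subr0. Qed.

Lemma word_nonpos x : nonneg_comb Pi (prod_refl (rev w) x) -> word_le x 0.
Proof. by move=> /nonneg_comb_lex; rewrite /word_le sub0r prod_reflN opprK. Qed.

End WordOrder.

Theorem lemma3p3p2 (R : realType) (n : nat) (Phi Pi beta : seq 'rV[R]_n) :
  root_system Phi -> indecomposable Phi -> simple_roots Phi Pi ->
  reduced_expr_w0 Pi beta ->
  forall m : nat, (m < size beta)%N ->
  exists le : 'rV[R]_n -> 'rV[R]_n -> Prop,
    total_vs_order le /\
    (forall k : nat, (k < size beta)%N ->
       if (k < m)%N then le 0 (gamma beta k) /\ gamma beta k <> 0
       else le (gamma beta k) 0 /\ gamma beta k <> 0).
Proof.
move=> Phi_root _ Pi_simple [beta_reduced _] m m_lt.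
have [M [coordE coord_inj]] := simple_coordinates Phi_root Pi_simple.
exists (word_le (take m beta) M); split.
  apply: word_le_total_vs_order => //.
  exact: (take_word_neq0 Phi_root Pi_simple beta_reduced).
move=> k k_lt; have gamma_neq0 : gamma beta k <> 0.
  by apply/eqP/(root_neq0 Phi_root)/(gamma_root Phi_root Pi_simple beta_reduced).
case: ifP => km; split => //.
  have [|y y_pos Ey] := gamma_before Phi_root Pi_simple beta_reduced (m := m) (k := k).
    by rewrite km ltnW.
  by apply: word_nonneg => //; rewrite Ey opprK.
have [|y y_pos Ey] := gamma_after Phi_root Pi_simple beta_reduced (m := m) (k := k).
  by rewrite k_lt leqNgt km.
by apply: word_nonpos => //; rewrite Ey.
Qed.
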